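(* Let $01234$ be a convex pentagon inscribed in a circle, with vertices in cyclic order. Let the side lengths be $$a_0=|23|,\quad a_1=|34|,\quad a_2=|40|,\quad a_3=|01|,\quad a_4=|12|,$$ so that $a_i$ is the length of the side opposite vertex $i$. Let $d_0=|14|$ be the diagonal disjoint from the side $23$. Then $$\left(d_0^2-a_2^2-a_3^2\right)^2(a_0d_0+a_1a_4)(a_1d_0+a_0a_4)(a_4d_0+a_0a_1)=(a_2a_3)^2\left[d_0^3-(a_0^2+a_1^2+a_4^2)d_0-2a_0a_1a_4\right]^2.$$ Equivalently, $X=d_0$ is a root of $$(X^2-q)^2(PX^3+SX^2+PQX+P^2)=p^2(X^3-QX-2P)^2,$$ where $p=a_2a_3$, $P=a_0a_1a_4$, $q=a_2^2+a_3^2$, $Q=a_0^2+a_1^2+a_4^2$, and $S=(a_0a_1)^2+(a_0a_4)^2+(a_1a_4)^2$.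
   Context: $|ij|$ denotes the distance between vertices $i$ and $j$. *)

From HB Require Import structures.
From mathcomp Require Import all_boot all_order all_algebra.
From mathcomp Require Import reals.
Set Implicit Arguments. Unset Strict Implicit. Unset Printing Implicit Defensive.
Import Order.TTheory GRing.Theory Num.Theory.
Local Open Scope ring_scope.

Section Geom.
Variable R : realType.

Definition dist (a b : R * R) : R :=
  Num.sqrt ((a.1 - b.1) ^+ 2 + (a.2 - b.2) ^+ 2).

(* signed (doubled) area of triangle abc: > 0 iff a,b,c counterclockwise *)
Definition orient (a b c : R * R) : R :=
  (b.1 - a.1) * (c.2 - a.2) - (b.2 - a.2) * (c.1 - a.1).

(* v 0, v 1, ..., v (n-1) are the vertices, in this cyclic order, of a
   (strictly) convex polygon: for every side v i v (i+1), all other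
   vertices lie strictly on the same side of it (uniformly left = ccw,
   or uniformly right = cw). *)
Definition convex_polygon (n : nat) (v : 'I_n -> R * R) : Prop :=
  (forall i j : 'I_n, j != i -> j != ordS i -> 0 < orient (v i) (v (ordS i)) (v j)) \/
  (forall i j : 'I_n, j != i -> j != ordS i -> orient (v i) (v (ordS i)) (v j) < 0).

Definition inscribed (n : nat) (v : 'I_n -> R * R) : Prop :=
  exists (c : R * R) (r : R), 0 < r /\ forall i, dist (v i) c = r.

End Geom.

From HB Require Import structures.
From mathcomp Require Import all_boot all_order all_algebra.
From mathcomp Require Import reals.
From mathcomp Require Import ring.
Set Implicit Arguments. Unset Strict Implicit. Unset Printing Implicit Defensive.
Import Order.TTheory GRing.Theory Num.Theory.
Local Open Scope ring_scope.

(* Let r be the circumradius. The triangle 014 gives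
   r^2 (4 a2^2 a3^2 - (a2^2 + a3^2 - d0^2)^2) = (a2 a3 d0)^2
   (abc = 4 r * area, with Heron's formula), and the convex cyclic
   quadrilateral 1234 gives Parameshvara's formula
   r^2 (4 (a4 a0 + a1 d0)^2 - (a4^2 + a0^2 - a1^2 - d0^2)^2)
     = (a4 a0 + a1 d0) (a4 a1 + a0 d0) (a4 d0 + a0 a1).
   The latter follows from the triangle formula for 123 once the diagonal
   |13| is eliminated using that the angles at 2 and 4 are supplementary,
   which is where convexity is needed. Eliminating r^2 between the two
   formulas gives the identity. *)

Lemma eq_sqr_mul_ge0 (R : realDomainType) (x y : R) :
  0 <= x * y -> x ^+ 2 = y ^+ 2 -> x = y.
Proof.
move=> xy_ge0 /eqP; rewrite eqf_sqr => /orP[/eqP // | /eqP xE].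
move: xy_ge0; rewrite xE mulNr oppr_ge0 -expr2 => y2_le0.
have y0 : y = 0 by apply/eqP; rewrite -sqrf_eq0 eq_le y2_le0 sqr_ge0.
by rewrite y0 oppr0.
Qed.

(* [a, b, c, d] are the sides of a cyclic quadrilateral in cyclic order and
   [e] is the squared diagonal separating [a, b] from [c, d]: the hypotheses
   say that the angles opposite [e] have opposite cosines and give the
   circumradius of the triangle with sides [a], [b], [sqrt e]. *)
Lemma parameshvara (F : fieldType) (r2 a b c d e : F) :
  a * b != 0 ->
  c * d * (a ^+ 2 + b ^+ 2 - e) + a * b * (c ^+ 2 + d ^+ 2 - e) = 0 ->
  r2 * (4 * a ^+ 2 * b ^+ 2 - (a ^+ 2 + b ^+ 2 - e) ^+ 2) = a ^+ 2 * b ^+ 2 * e ->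
  r2 * (4 * (a * b + c * d) ^+ 2 - (a ^+ 2 + b ^+ 2 - c ^+ 2 - d ^+ 2) ^+ 2)
  = (a * b + c * d) * (a * c + b * d) * (a * d + b * c).
Proof.
move=> ab_neq0 cosines triangle; set s := a * b + c * d.
have sW : s * (a ^+ 2 + b ^+ 2 - e) = a * b * (a ^+ 2 + b ^+ 2 - c ^+ 2 - d ^+ 2).
  by apply: subr0_eq; rewrite -cosines /s; ring.
have se : s * e = (a * c + b * d) * (a * d + b * c).
  by apply/esym/subr0_eq; rewrite -cosines /s; ring.
have a2b2_neq0 : a ^+ 2 * b ^+ 2 != 0 by rewrite -exprMn expf_neq0.
apply: (mulfI a2b2_neq0).
transitivity (r2 * (4 * a ^+ 2 * b ^+ 2 * s ^+ 2
                    - (a * b * (a ^+ 2 + b ^+ 2 - c ^+ 2 - d ^+ 2)) ^+ 2)).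
  by ring.
rewrite -sW.
transitivity (s ^+ 2 * (r2 * (4 * a ^+ 2 * b ^+ 2 - (a ^+ 2 + b ^+ 2 - e) ^+ 2))).
  by ring.
rewrite triangle; transitivity (a ^+ 2 * b ^+ 2 * s * (s * e)); first by ring.
by rewrite se; ring.
Qed.

Lemma circumradius_elimination (F : fieldType) (r2 a0 a1 a2 a3 a4 d : F) :
  r2 != 0 ->
  r2 * (4 * a2 ^+ 2 * a3 ^+ 2 - (a2 ^+ 2 + a3 ^+ 2 - d ^+ 2) ^+ 2)
    = a2 ^+ 2 * a3 ^+ 2 * d ^+ 2 ->
  r2 * (4 * (a4 * a0 + a1 * d) ^+ 2 - (a4 ^+ 2 + a0 ^+ 2 - a1 ^+ 2 - d ^+ 2) ^+ 2)
    = (a4 * a0 + a1 * d) * (a4 * a1 + a0 * d) * (a4 * d + a0 * a1) ->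
  (d ^+ 2 - a2 ^+ 2 - a3 ^+ 2) ^+ 2
    * (a0 * d + a1 * a4) * (a1 * d + a0 * a4) * (a4 * d + a0 * a1)
  = (a2 * a3) ^+ 2
    * (d ^+ 3 - (a0 ^+ 2 + a1 ^+ 2 + a4 ^+ 2) * d - 2 * a0 * a1 * a4) ^+ 2.
Proof.
move=> r2_neq0 triangle quadrilateral; apply: (mulfI r2_neq0); apply: subr0_eq.
set P := (a4 * a0 + a1 * d) * (a4 * a1 + a0 * d) * (a4 * d + a0 * a1).
transitivity (a2 ^+ 2 * a3 ^+ 2 * d ^+ 2 * (r2 * (4 * (a4 * a0 + a1 * d) ^+ 2
                 - (a4 ^+ 2 + a0 ^+ 2 - a1 ^+ 2 - d ^+ 2) ^+ 2) - P)
  - (r2 * (4 * a2 ^+ 2 * a3 ^+ 2 - (a2 ^+ 2 + a3 ^+ 2 - d ^+ 2) ^+ 2)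
     - a2 ^+ 2 * a3 ^+ 2 * d ^+ 2) * P).
  by rewrite /P; ring.
by rewrite triangle quadrilateral !subrr mulr0 mul0r subrr.
Qed.

Section PlaneGeometry.
Variable R : realType.
Implicit Types a b c e : R * R.

Definition sqdist a b := (a.1 - b.1) ^+ 2 + (a.2 - b.2) ^+ 2.

Definition dot a b e := (b.1 - a.1) * (e.1 - a.1) + (b.2 - a.2) * (e.2 - a.2).

Lemma sqdist_ge0 a b : 0 <= sqdist a b.
Proof. by rewrite addr_ge0 ?sqr_ge0. Qed.

Lemma sqdistC a b : sqdist a b = sqdist b a.
Proof. by rewrite /sqdist; ring. Qed.

Lemma distC a b : dist a b = dist b a.
Proof. by rewrite /dist -/(sqdist a b) -/(sqdist b a) sqdistC. Qed.

Lemma dist_ge0 a b : 0 <= dist a b.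
Proof. exact: sqrtr_ge0. Qed.

Lemma sqr_dist a b : dist a b ^+ 2 = sqdist a b.
Proof. exact/sqr_sqrtr/sqdist_ge0. Qed.

Lemma law_of_cosines a b e :
  2 * dot a b e = sqdist a b + sqdist a e - sqdist b e.
Proof. by rewrite /dot /sqdist; ring. Qed.

Lemma orient_sqr_add_dot_sqr a b e :
  orient a b e ^+ 2 + dot a b e ^+ 2 = sqdist a b * sqdist a e.
Proof. by rewrite /orient /dot /sqdist; ring. Qed.

(* The Gram determinant of [c - a], [b - a], [e - a] vanishes in the plane. *)
Lemma gram_plane a b c e :
  sqdist a c * orient a b e ^+ 2
  = dot a c b ^+ 2 * sqdist a e + dot a c e ^+ 2 * sqdist a b
    - 2 * dot a c b * dot a c e * dot a b e.
Proof. by rewrite /orient /dot /sqdist; ring. Qed.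

Lemma dot_isosceles a b c : sqdist a c = sqdist b c -> 2 * dot a c b = sqdist a b.
Proof.
by move=> acbc; rewrite law_of_cosines [sqdist c b]sqdistC -acbc addrAC subrr add0r.
Qed.

Section Circumradius.
Context {c : R * R} {r : R} {a b e : R * R}.
Hypotheses (ha : sqdist a c = r ^+ 2) (hb : sqdist b c = r ^+ 2)
  (he : sqdist e c = r ^+ 2).

Lemma circumradius_orient :
  4 * r ^+ 2 * orient a b e ^+ 2 = sqdist a b * sqdist a e * sqdist b e.
Proof.
rewrite -ha -mulrA gram_plane.
have -> : 4 * (dot a c b ^+ 2 * sqdist a e + dot a c e ^+ 2 * sqdist a b
    - 2 * dot a c b * dot a c e * dot a b e)
  = (2 * dot a c b) ^+ 2 * sqdist a e + (2 * dot a c e) ^+ 2 * sqdist a b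
    - (2 * dot a c b) * (2 * dot a c e) * (2 * dot a b e) by ring.
rewrite (@dot_isosceles a b) ?ha ?hb // (@dot_isosceles a e) ?ha ?he //.
by rewrite law_of_cosines; ring.
Qed.

Lemma circumradius_sides :
  r ^+ 2 * (4 * sqdist a b * sqdist a e
            - (sqdist a b + sqdist a e - sqdist b e) ^+ 2)
  = sqdist a b * sqdist a e * sqdist b e.
Proof.
rewrite -circumradius_orient -law_of_cosines -[4 * sqdist a b * _]mulrA.
by rewrite -orient_sqr_add_dot_sqr; ring.
Qed.

End Circumradius.

Section CyclicQuadrilateral.
Context {c : R * R} {r : R} {p q s t : R * R}.
Hypotheses (r_gt0 : 0 < r) (hp : sqdist p c = r ^+ 2) (hq : sqdist q c = r ^+ 2)
  (hs : sqdist s c = r ^+ 2) (ht : sqdist t c = r ^+ 2).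
Hypothesis convex_pqst : 0 < orient p q s * orient s t p.

(* The right-hand side of the first step is the expansion of the determinant
   with rows [x, y, |x - c|^2 - r^2, 1] along its third column. *)
Lemma concyclic_dot_orient :
  dot q p s * orient s t p + orient p q s * dot t p s = 0.
Proof.
transitivity (- ((sqdist p c - r ^+ 2) * orient q s t
  - (sqdist q c - r ^+ 2) * orient p s t
  + (sqdist s c - r ^+ 2) * orient p q t
  - (sqdist t c - r ^+ 2) * orient p q s)).
  by rewrite /dot /orient /sqdist; ring.
by rewrite hp hq hs ht subrr; ring.
Qed.

Let r4_neq0 : 4 * r ^+ 2 != 0.
Proof. by rewrite mulf_neq0 ?pnatr_eq0 ?expf_neq0 ?gt_eqF. Qed.

Lemma orient_convex_neq0 : orient p q s != 0.
Proof. by apply: contraTneq convex_pqst => ->; rewrite mul0r ltxx. Qed.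

Lemma cyclic_quad_cosines :
  dist s t * dist t p * dot q p s + dist p q * dist q s * dot t p s = 0.
Proof.
(* Law of sines: both angles at [q] and [t] face the chord [ps]; convexity
   makes their sines have the same sign. *)
have sines : orient p q s * (dist s t * dist t p)
           = orient s t p * (dist p q * dist q s).
  apply: eq_sqr_mul_ge0.
    by rewrite mulrACA pmulr_rge0 //; do !apply: mulr_ge0; exact: dist_ge0.
  apply: (mulfI r4_neq0); rewrite !exprMn !sqr_dist.
  transitivity (4 * r ^+ 2 * orient p q s ^+ 2 * (sqdist s t * sqdist t p)).
    by ring.
  transitivity (4 * r ^+ 2 * orient s t p ^+ 2 * (sqdist p q * sqdist q s)).
    rewrite (circumradius_orient hp hq hs) (circumradius_orient hs ht hp).
    by rewrite [sqdist s p]sqdistC; ring.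
  by ring.
apply: (mulfI orient_convex_neq0); rewrite mulr0.
transitivity (orient p q s * (dist s t * dist t p) * dot q p s
              + dist p q * dist q s * (orient p q s * dot t p s)); first by ring.
rewrite sines; transitivity (dist p q * dist q s
  * (dot q p s * orient s t p + orient p q s * dot t p s)); first by ring.
by rewrite concyclic_dot_orient mulr0.
Qed.

Lemma cyclic_quad_circumradius :
  r ^+ 2 * (4 * (dist p q * dist q s + dist s t * dist t p) ^+ 2
            - (dist p q ^+ 2 + dist q s ^+ 2 - dist s t ^+ 2 - dist t p ^+ 2) ^+ 2)
  = (dist p q * dist q s + dist s t * dist t p)
    * (dist p q * dist s t + dist q s * dist t p)
    * (dist p q * dist t p + dist q s * dist s t).
Proof.
apply: (@parameshvara _ _ _ _ _ _ (sqdist p s)).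
- rewrite -sqrf_eq0 exprMn !sqr_dist.
  have : sqdist p q * sqdist p s * sqdist q s != 0.
    rewrite -(circumradius_orient hp hq hs).
    by rewrite mulf_neq0 ?r4_neq0 ?expf_neq0 ?orient_convex_neq0.
  by rewrite !mulf_eq0 !negb_or => /andP[/andP[-> _] ->].
- by rewrite -(mulr0 2) -cyclic_quad_cosines !sqr_dist /dot /sqdist; ring.
- by rewrite !sqr_dist -[sqdist p q]sqdistC; exact: circumradius_sides hq hp hs.
Qed.

End CyclicQuadrilateral.

End PlaneGeometry.

Lemma convex_polygon_orient_mul_gt0 (R : realType) (n : nat) (v : 'I_n -> R * R)
    (i j : 'I_n) :
  convex_polygon v -> j != i -> j != ordS i -> i != ordS j ->
  0 < orient (v i) (v (ordS i)) (v j) * orient (v j) (v (ordS j)) (v i).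
Proof.
move=> [] convex ji jSi iSj; have ij : i != j by rewrite eq_sym.
  by rewrite mulr_gt0 ?convex.
by rewrite -mulrNN mulr_gt0 // oppr_gt0 convex.
Qed.

Theorem theorem4 (R : realType) (v : 'I_5 -> R * R) :
  convex_polygon v -> inscribed v ->
  let a0 := dist (v (inord 2)) (v (inord 3)) in
  let a1 := dist (v (inord 3)) (v (inord 4)) in
  let a2 := dist (v (inord 4)) (v (inord 0)) in
  let a3 := dist (v (inord 0)) (v (inord 1)) in
  let a4 := dist (v (inord 1)) (v (inord 2)) in
  let d0 := dist (v (inord 1)) (v (inord 4)) in
  (d0 ^+ 2 - a2 ^+ 2 - a3 ^+ 2) ^+ 2
    * (a0 * d0 + a1 * a4) * (a1 * d0 + a0 * a4) * (a4 * d0 + a0 * a1)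
  = (a2 * a3) ^+ 2
    * (d0 ^+ 3 - (a0 ^+ 2 + a1 ^+ 2 + a4 ^+ 2) * d0 - 2 * a0 * a1 * a4) ^+ 2.
Proof.
move=> convex [c [r [r_gt0 on_circle]]] a0 a1 a2 a3 a4 d0.
have concyclic k : sqdist (v k) c = r ^+ 2 by rewrite -sqr_dist on_circle.
have convex1234 : 0 < orient (v (inord 1)) (v (inord 2)) (v (inord 3))
                    * orient (v (inord 3)) (v (inord 4)) (v (inord 1)).
  have S1 : ordS (inord 1 : 'I_5) = inord 2 by apply/val_inj; rewrite /= !inordK.
  have S3 : ordS (inord 3 : 'I_5) = inord 4 by apply/val_inj; rewrite /= !inordK.
  have := convex_polygon_orient_mul_gt0 (i := inord 1) (j := inord 3) convex.
  by rewrite S1 S3; apply; rewrite -val_eqE /= !inordK.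
have quadrilateral := cyclic_quad_circumradius r_gt0 (concyclic _) (concyclic _)
  (concyclic _) (concyclic _) convex1234.
have triangle := circumradius_sides (concyclic (inord 0)) (concyclic (inord 4))
  (concyclic (inord 1)).
rewrite -!sqr_dist [dist (v (inord 0)) _]distC in triangle.
rewrite [dist (v (inord 4)) (v (inord 1))]distC in triangle quadrilateral.
apply: circumradius_elimination triangle quadrilateral.
by rewrite expf_neq0 ?gt_eqF.
Qed.
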